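(* Let $X$ be a geodesic $\delta$--hyperbolic space ($\delta\geqslant0$), $x_0\in X$, and let $u_1,u_2,v,w_1,w_2$ be isometries of $X$ with $u_1vw_1=u_2vw_2$ such that the products $u_1v$, $u_2v$, $vw_1$ and $vw_2$ are reduced at $x_0$. Assume $|vx_0-x_0|>26\delta$, $|u_1x_0-u_2x_0|\leqslant|vx_0-x_0|$ and $|u_1x_0-x_0|\leqslant|u_2x_0-x_0|$. Then $x_0$ and $vx_0$ are in $C_{u_1^{-1}u_2}^{+190\delta}$. Moreover, $(x_0,u_2x_0)_{u_1x_0}\leqslant 24\delta$, $(u_1x_0,u_1vx_0)_{u_2x_0}\leqslant 66\delta$ and $(u_2x_0,u_2vx_0)_{u_1vx_0}\leqslant 138\delta$.
   Context: Distance $|x-y|$; Gromov product $(p,q)_x:=\frac12(|p-x|+|q-x|-|p-q|)$; $X$ is $\delta$--hyperbolic if $(p,r)_x\geqslant\min\{(p,q)_x,(q,r)_x\}-\delta$ for all $p,q,r,x$. The product $uv$ of two isometries is reduced at $x_0$ if $(u^{-1}x_0,vx_0)_{x_0}\leqslant\delta$. For an isometry $g$, $[g]:=\inf_x|gx-x|$ and $C_g:=\{x\in X\mid|gx-x|\leqslant[g]+8\delta\}$; $A^{+a}:=\{x\mid d(x,A)\leqslant a\}$. *)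

From Stdlib Require Import Reals.
From Coquelicot Require Import Coquelicot.
Open Scope R_scope.

Record MetricSpace := {
  mcarrier :> Type;
  mdist : mcarrier -> mcarrier -> R;
  dist_refl : forall x, mdist x x = 0;
  dist_sym : forall x y, mdist x y = mdist y x;
  dist_pos : forall x y, 0 <= mdist x y;
  dist_sep : forall x y, mdist x y = 0 -> x = y;
  dist_tri : forall x y z, mdist x z <= mdist x y + mdist y z
}.

Arguments mdist {_} _ _.

Definition geodesic_space (X : MetricSpace) : Prop :=
  forall x y : X, exists gam : R -> X,
    gam 0 = x /\ gam (mdist x y) = y /\
    forall s t, 0 <= s <= mdist x y -> 0 <= t <= mdist x y ->
      mdist (gam s) (gam t) = Rabs (s - t).

Definition gromov {X : MetricSpace} (p q x : X) : R :=
  (mdist p x + mdist q x - mdist p q) / 2.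

Definition hyperbolic (X : MetricSpace) (delta : R) : Prop :=
  forall p q r x : X,
    gromov p r x >= Rmin (gromov p q x) (gromov q r x) - delta.

Record isometry (X : MetricSpace) := {
  iso_fun :> X -> X;
  iso_inv : X -> X;
  iso_inv_l : forall x, iso_inv (iso_fun x) = x;
  iso_inv_r : forall x, iso_fun (iso_inv x) = x;
  iso_dist : forall x y, mdist (iso_fun x) (iso_fun y) = mdist x y
}.

Arguments iso_inv {_} _ _.

Definition reduced {X : MetricSpace} (delta : R) (x0 : X) (u v : isometry X) : Prop :=
  gromov (iso_inv u x0) (v x0) x0 <= delta.

Definition transl_len {X : MetricSpace} (g : X -> X) : Rbar :=
  Glb_Rbar (fun r => exists x : X, r = mdist (g x) x).

Definition C_set {X : MetricSpace} (delta : R) (g : X -> X) (x : X) : Prop :=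
  Rbar_le (Finite (mdist (g x) x)) (Rbar_plus (transl_len g) (Finite (8 * delta))).

Definition dist_set {X : MetricSpace} (x : X) (A : X -> Prop) : Rbar :=
  Glb_Rbar (fun r => exists y : X, A y /\ r = mdist x y).

(* A^{+a} := { x | d(x, A) <= a } *)
Definition nbhd {X : MetricSpace} (A : X -> Prop) (a : R) (x : X) : Prop :=
  Rbar_le (dist_set x A) (Finite a).

From Pilot Require Import Defs.
From Stdlib Require Import Reals Lra.
From Coquelicot Require Import Coquelicot.
Open Scope R_scope.

(* Write a_i = u_i x0, b_i = u_i v x0 and P = u1 v w1 x0 = u2 v w2 x0.  As the products are
   reduced and |a_i - b_i| = |v x0 - x0| is long, the vertices a_i, b_i of the broken geodesics
   x0, a_i, b_i, P are 2 delta-close to a geodesic from x0 to P, where distances are differences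
   of distances to x0 up to 10 delta.  The points are thus almost aligned, which bounds the three
   Gromov products, and also (a1, phi a2)_a2 and (b1, phi b2)_b2 for phi = u2 u1^-1.  Conjugated
   by u1 these are (x, g g x)_(g x) for x = x0 and x = v x0, and every x lies within
   (x, g g x)_(g x) of C_g: the point at that distance from x on a geodesic from x to g x is
   moved by at most |x - g g x| - |x - g x| + 4 delta, while the orbit of x drifts away at rate
   |x - g g x| - |x - g x| - 2 delta, which bounds every displacement of g from below. *)

Definition dist_preserving {X : MetricSpace} (f : X -> X) : Prop :=
  forall x y, mdist (f x) (f y) = mdist x y.

Section Metric.

Variable X : MetricSpace.

(* Coquelicot's [dist_sym] shadows the axiom of [MetricSpace]. *)
Let sym := Defs.dist_sym X.

Lemma gromov_sym (p q x : X) : gromov p q x = gromov q p x.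
Proof. unfold gromov. rewrite (sym p q). lra. Qed.

Lemma gromov_nonneg (p q x : X) : 0 <= gromov p q x.
Proof.
  unfold gromov. pose proof (Defs.dist_tri X p x q) as Htri. rewrite (sym x q) in Htri. lra.
Qed.

Lemma gromov_image (f : X -> X) (p q x : X) :
  dist_preserving f -> gromov (f p) (f q) (f x) = gromov p q x.
Proof. intro Hf. unfold gromov. rewrite !Hf. reflexivity. Qed.

Lemma iso_dist_preserving (u : isometry X) : dist_preserving u.
Proof. exact (iso_dist X u). Qed.

Lemma iso_inv_dist_l (u : isometry X) (x y : X) : mdist (iso_inv u x) y = mdist x (u y).
Proof. rewrite <- (iso_dist X u), iso_inv_r. reflexivity. Qed.

Lemma iso_inv_comp_dist_preserving (u1 u2 : isometry X) :
  dist_preserving (fun x => iso_inv u1 (u2 x)).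
Proof. intros x y. rewrite iso_inv_dist_l, iso_inv_r, iso_dist. reflexivity. Qed.

Lemma comp_iso_inv_dist_preserving (u1 u2 : isometry X) :
  dist_preserving (fun x => u2 (iso_inv u1 x)).
Proof. intros x y. rewrite iso_dist, iso_inv_dist_l, iso_inv_r. reflexivity. Qed.

Lemma reduced_gromov_image (delta : R) (x0 : X) (u : X -> X) (v w : isometry X) :
  dist_preserving u -> reduced delta x0 v w ->
  gromov (u x0) (u (v (w x0))) (u (v x0)) <= delta.
Proof.
  intros Hu Hvw. unfold reduced in Hvw.
  rewrite <- (gromov_image v), iso_inv_r in Hvw by apply iso_dist_preserving.
  rewrite gromov_image by exact Hu. exact Hvw.
Qed.

Lemma C_set_intro (delta : R) (g : X -> X) (y : X) :
  (forall z, mdist (g y) y <= mdist (g z) z + 8 * delta) -> C_set delta g y.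
Proof.
  intro Hy. unfold C_set, transl_len.
  destruct (Glb_Rbar_correct (fun r => exists z : X, r = mdist (g z) z)) as [_ Hglb].
  assert (Hlb : Rbar_le (mdist (g y) y - 8 * delta)
                  (Glb_Rbar (fun r => exists z : X, r = mdist (g z) z))).
  { apply Hglb. intros r [z ->]. simpl. specialize (Hy z). lra. }
  destruct (Glb_Rbar _); simpl in *; lra || tauto.
Qed.

Lemma nbhd_intro (A : X -> Prop) (a : R) (x y : X) : A y -> mdist x y <= a -> nbhd A a x.
Proof.
  intros Ay Hxy. unfold nbhd, dist_set.
  destruct (Glb_Rbar_correct (fun r => exists y : X, A y /\ r = mdist x y)) as [Hlb _].
  specialize (Hlb (mdist x y) (ex_intro _ y (conj Ay eq_refl))).
  destruct (Glb_Rbar _); simpl in *; lra || tauto.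
Qed.

End Metric.

Section Hyperbolic.

Variables (X : MetricSpace) (delta : R).
Hypothesis hyp : hyperbolic X delta.

Let sym := Defs.dist_sym X.

Lemma hyperbolic_delta_nonneg : X -> 0 <= delta.
Proof.
  intro x. specialize (hyp x x x x). unfold gromov, Rmin in hyp.
  rewrite Defs.dist_refl in hyp. destruct (Rle_dec _ _); lra.
Qed.

Lemma gromov_le_cases (p q r x : X) :
  gromov p q x <= gromov p r x + delta \/ gromov q r x <= gromov p r x + delta.
Proof.
  specialize (hyp p q r x). unfold Rmin in hyp.
  destruct (Rle_dec (gromov p q x) (gromov q r x)); [left | right]; lra.
Qed.

Section Displacement.

Variable g : X -> X.
Hypothesis g_dist : dist_preserving g.

Lemma iter_dist_preserving (n : nat) (a b : X) :
  mdist (Nat.iter n g a) (Nat.iter n g b) = mdist a b.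
Proof. induction n; simpl; [reflexivity | rewrite g_dist; exact IHn]. Qed.

Lemma orbit_dist_step (x : X) (k : nat) :
  mdist x (g (g x)) > mdist x (g x) + 2 * delta ->
  mdist x (Nat.iter (S k) g x) - mdist x (Nat.iter k g x)
  >= mdist x (g (g x)) - mdist x (g x) - 2 * delta.
Proof.
  intro Hc. set (l := mdist x (g x)) in *. set (m := mdist x (g (g x))) in *.
  induction k as [|k IH].
  - simpl. rewrite Defs.dist_refl. pose proof (Defs.dist_tri X x (g x) (g (g x))) as Htri.
    rewrite g_dist in Htri. pose proof (hyperbolic_delta_nonneg x). fold l m in Htri |- *. lra.
  - set (x0 := Nat.iter k g x) in *. set (x1 := Nat.iter (S k) g x) in *.
    set (x2 := Nat.iter (S (S k)) g x).
    assert (E01 : mdist x0 x1 = l).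
    { unfold x0, x1. rewrite Nat.iter_succ_r, iter_dist_preserving. reflexivity. }
    assert (E12 : mdist x2 x1 = l).
    { unfold x1, x2. rewrite (Nat.iter_succ_r (S k)), iter_dist_preserving, sym. reflexivity. }
    assert (E02 : mdist x0 x2 = m).
    { unfold x0, x2. rewrite !Nat.iter_succ_r, iter_dist_preserving. reflexivity. }
    pose proof (sym x0 x).
    destruct (gromov_le_cases x0 x x2 x1) as [Q | Q]; unfold gromov in Q; lra.
Qed.

Lemma orbit_dist_ge (x : X) (n : nat) :
  mdist x (g (g x)) > mdist x (g x) + 2 * delta ->
  INR n * (mdist x (g (g x)) - mdist x (g x) - 2 * delta) <= mdist x (Nat.iter n g x).
Proof.
  intro Hc. induction n as [|n IH].
  - simpl. rewrite Defs.dist_refl. lra.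
  - rewrite S_INR. pose proof (orbit_dist_step x n Hc). lra.
Qed.

Lemma orbit_dist_le (x z : X) (n : nat) :
  mdist x (Nat.iter n g x) <= 2 * mdist x z + INR n * mdist (g z) z.
Proof.
  assert (Hz : mdist z (Nat.iter n g z) <= INR n * mdist (g z) z).
  { induction n as [|n IH].
    - simpl. rewrite Defs.dist_refl. lra.
    - rewrite S_INR. pose proof (Defs.dist_tri X z (Nat.iter n g z) (Nat.iter (S n) g z)) as Htri.
      rewrite (Nat.iter_succ_r n), iter_dist_preserving, (sym z (g z)) in Htri.
      rewrite Nat.iter_succ_r. lra. }
  pose proof (Defs.dist_tri X x z (Nat.iter n g x)).
  pose proof (Defs.dist_tri X z (Nat.iter n g z) (Nat.iter n g x)) as Htri.
  rewrite iter_dist_preserving, (sym z x) in Htri. lra.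
Qed.

(* The distance from [x] to its [n]-th iterate grows linearly at the rate on the left, while
   the orbit of [z] stays within [2 |x - z| + n |g z - z|] of the orbit of [x]. *)
Lemma displacement_ge (x z : X) :
  mdist x (g (g x)) > mdist x (g x) + 2 * delta ->
  mdist x (g (g x)) - mdist x (g x) - 2 * delta <= mdist (g z) z.
Proof.
  intro Hc. set (c := mdist x (g (g x)) - mdist x (g x) - 2 * delta).
  destruct (Rle_or_lt c (mdist (g z) z)) as [Hle | Hlt]; [exact Hle | exfalso].
  destruct (INR_archimed (c - mdist (g z) z) (2 * mdist x z)) as [n Hn]; [lra |].
  pose proof (orbit_dist_ge x n Hc) as Hge. pose proof (orbit_dist_le x z n).
  fold c in Hge. nra.
Qed.

Lemma displacement_on_segment (x y : X) (t : R) :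
  mdist x y = t -> mdist y (g x) = mdist x (g x) - t ->
  t <= gromov x (g (g x)) (g x) -> t <= mdist x (g x) / 2 ->
  mdist (g y) y <= mdist x (g x) - 2 * t + 4 * delta.
Proof.
  intros Hxy Hyg Htp Htl. unfold gromov in Htp. pose proof (hyperbolic_delta_nonneg x).
  pose proof (g_dist y x). pose proof (g_dist (g x) y). pose proof (g_dist x (g x)).
  pose proof (sym y x).
  pose proof (sym (g (g x)) (g x)). pose proof (sym (g y) y). pose proof (sym (g x) y).
  pose proof (sym (g (g x)) (g y)).
  destruct (gromov_le_cases y x (g y) (g x)) as [Q1 | Q1];
    destruct (gromov_le_cases x (g (g x)) (g y) (g x)) as [Q2 | Q2];
    unfold gromov in Q1, Q2; lra.
Qed.

(* The witness lies on a geodesic from [x] to [g x], at distance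
   [min((x, g g x)_(g x), |x - g x| / 2)] from [x]. *)
Lemma exists_C_set_near (x : X) :
  geodesic_space X -> exists y, C_set delta g y /\ mdist x y <= gromov x (g (g x)) (g x).
Proof.
  intro Hgeo. pose proof (hyperbolic_delta_nonneg x).
  set (l := mdist x (g x)). set (m := mdist x (g (g x))). set (p := gromov x (g (g x)) (g x)).
  assert (Hp : p = l - m / 2).
  { unfold p, gromov. rewrite g_dist, (sym (g x) x). fold l m. lra. }
  assert (Hl : 0 <= l) by apply Defs.dist_pos.
  pose proof (gromov_nonneg X x (g (g x)) (g x)) as Hp0. fold p in Hp0.
  set (t := Rmin p (l / 2)).
  pose proof (Rmin_l p (l / 2)) as Htp. pose proof (Rmin_r p (l / 2)) as Htl. fold t in Htp, Htl.
  assert (Ht0 : 0 <= t) by (apply Rmin_glb; lra).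
  destruct (Hgeo x (g x)) as [gam [G0 [G1 G2]]]. fold l in G1, G2.
  assert (Hxy : mdist x (gam t) = t).
  { rewrite <- G0 at 1. rewrite G2 by lra. rewrite Rabs_left1; lra. }
  assert (Hyg : mdist (gam t) (g x) = l - t).
  { rewrite <- G1 at 1. rewrite G2 by lra. rewrite Rabs_left1; lra. }
  exists (gam t). split; [| lra].
  pose proof (displacement_on_segment x (gam t) t Hxy Hyg Htp Htl) as Hdisp. fold l in Hdisp.
  apply C_set_intro. intro z.
  destruct (Rlt_or_le (l + 2 * delta) m) as [Hc | Hc].
  - pose proof (displacement_ge x z Hc) as Hz. fold l m in Hz.
    assert (t = p) by (apply Rmin_left; lra). lra.
  - pose proof (Defs.dist_pos X (g z) z).
    assert (l / 2 - delta <= t) by (apply Rmin_glb; lra). lra.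
Qed.

Lemma nbhd_C_set (x : X) (a : R) :
  geodesic_space X -> gromov x (g (g x)) (g x) <= a -> nbhd (C_set delta g) a x.
Proof.
  intros Hgeo Ha. destruct (exists_C_set_near x Hgeo) as [y [Cy Hxy]].
  apply (nbhd_intro X _ _ x y Cy). lra.
Qed.

End Displacement.

Lemma gromov_le_of_broken_geodesic (o a b P : X) :
  gromov o b a <= delta -> gromov a P b <= delta -> 3 * delta < mdist a b ->
  gromov o P a <= 2 * delta.
Proof.
  intros Hoba HaPb Hab. unfold gromov in *.
  pose proof (sym a b). pose proof (sym P a).
  destruct (gromov_le_cases o P b a) as [Q | Q]; unfold gromov in Q; lra.
Qed.

Lemma dist_le_near_geodesic (o P a b : X) (ea eb : R) :
  gromov o P a <= ea -> gromov o P b <= eb -> mdist o b <= mdist o a ->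
  mdist a b <= mdist o a - mdist o b + 2 * ea + 2 * eb + 2 * delta.
Proof.
  intros Ha Hb Hab. unfold gromov in *.
  pose proof (Defs.dist_tri X o a P). pose proof (Defs.dist_tri X o b P).
  pose proof (sym a o). pose proof (sym P o).
  pose proof (sym b o). pose proof (sym P b).
  pose proof (sym P a).
  destruct (gromov_le_cases a P b o) as [Q | Q]; unfold gromov in Q; lra.
Qed.

Section TwoBrokenGeodesics.

Variables (o a1 a2 b1 b2 P : X) (L : R).
Hypotheses (red_a1 : gromov o b1 a1 <= delta) (red_a2 : gromov o b2 a2 <= delta)
  (red_b1 : gromov a1 P b1 <= delta) (red_b2 : gromov a2 P b2 <= delta)
  (len_1 : mdist a1 b1 = L) (len_2 : mdist a2 b2 = L) (long : 3 * delta < L)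
  (short_a1a2 : mdist a1 a2 <= L) (a1_closer : mdist a1 o <= mdist a2 o).

Lemma vertices_near_geodesic (a b : X) :
  gromov o b a <= delta -> gromov a P b <= delta -> mdist a b = L ->
  gromov o P a <= 2 * delta /\ gromov o P b <= 2 * delta.
Proof.
  intros Ha Hb Hab. split.
  - apply (gromov_le_of_broken_geodesic o a b P); lra.
  - rewrite gromov_sym. rewrite gromov_sym in Ha, Hb.
    apply (gromov_le_of_broken_geodesic P b a o); [exact Hb | exact Ha | rewrite sym; lra].
Qed.

Lemma dist_near_cases (a b : X) :
  gromov o P a <= 2 * delta -> gromov o P b <= 2 * delta ->
  (mdist o b <= mdist o a /\ mdist a b <= mdist o a - mdist o b + 10 * delta) \/
  (mdist o a < mdist o b /\ mdist a b <= mdist o b - mdist o a + 10 * delta).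
Proof.
  intros Ha Hb. destruct (Rle_or_lt (mdist o b) (mdist o a)) as [Hab | Hab].
  - left. split; [exact Hab |].
    pose proof (dist_le_near_geodesic o P a b _ _ Ha Hb Hab). lra.
  - right. split; [exact Hab |]. rewrite sym.
    pose proof (dist_le_near_geodesic o P b a _ _ Hb Ha (Rlt_le _ _ Hab)). lra.
Qed.

Let near_a1 : gromov o P a1 <= 2 * delta :=
  proj1 (vertices_near_geodesic a1 b1 red_a1 red_b1 len_1).
Let near_b1 : gromov o P b1 <= 2 * delta :=
  proj2 (vertices_near_geodesic a1 b1 red_a1 red_b1 len_1).
Let near_a2 : gromov o P a2 <= 2 * delta :=
  proj1 (vertices_near_geodesic a2 b2 red_a2 red_b2 len_2).
Let near_b2 : gromov o P b2 <= 2 * delta :=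
  proj2 (vertices_near_geodesic a2 b2 red_a2 red_b2 len_2).

Let dist_a1_a2 : mdist o a1 <= mdist o a2 /\ mdist a1 a2 <= mdist o a2 - mdist o a1 + 10 * delta.
Proof.
  pose proof (sym a1 o). pose proof (sym a2 o). pose proof (sym a1 a2).
  destruct (dist_near_cases a2 a1 near_a2 near_a1); lra.
Qed.

Lemma gromov_at_a1_le : gromov o a2 a1 <= 5 * delta.
Proof.
  unfold gromov. pose proof (sym a2 a1). pose proof dist_a1_a2. lra.
Qed.

Let reach_b1 : mdist o a1 + L - 2 * delta <= mdist o b1 <= mdist o a1 + L.
Proof.
  pose proof red_a1 as Hred. unfold gromov in Hred. pose proof (Defs.dist_tri X o a1 b1).
  pose proof (sym b1 a1). lra.
Qed.

Let reach_b2 : mdist o a2 + L - 2 * delta <= mdist o b2 <= mdist o a2 + L.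
Proof.
  pose proof red_a2 as Hred. unfold gromov in Hred. pose proof (Defs.dist_tri X o a2 b2).
  pose proof (sym b2 a2). lra.
Qed.

Lemma gromov_at_a2_le : gromov a1 b1 a2 <= 11 * delta.
Proof.
  unfold gromov. pose proof dist_a1_a2. pose proof reach_b1.
  pose proof (Defs.dist_tri X o a1 a2). pose proof (sym b1 a2).
  destruct (dist_near_cases a2 b1 near_a2 near_b1); lra.
Qed.

Lemma gromov_at_b1_le : gromov a2 b2 b1 <= 14 * delta.
Proof.
  unfold gromov. pose proof dist_a1_a2. pose proof reach_b1. pose proof reach_b2.
  pose proof (Defs.dist_tri X o a1 a2).
  destruct (dist_near_cases a2 b1 near_a2 near_b1);
    destruct (dist_near_cases b2 b1 near_b2 near_b1); lra.
Qed.

(* Four-point condition at [a2]: either [(a1, phi a2)_a2] is bounded by [(a1, b2)_a2], which is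
   small as [a2] lies between [a1] and [b2], or [(phi a2, b2)_a2] is, which forces [|a1 - a2|]
   to be small. *)
Lemma gromov_translate_at_a2_le (phi : X -> X) :
  dist_preserving phi -> phi a1 = a2 -> phi b1 = b2 -> gromov a1 (phi a2) a2 <= 19 * delta.
Proof.
  intros Hphi Ha Hb.
  assert (Hae : mdist a2 (phi a2) = mdist a1 a2) by (rewrite <- Ha at 1; apply Hphi).
  assert (Heb : mdist (phi a2) b2 = mdist a2 b1) by (rewrite <- Hb; apply Hphi).
  set (e := phi a2) in *.
  pose proof dist_a1_a2. pose proof reach_b1. pose proof reach_b2.
  pose proof (Defs.dist_tri X o a1 b2). pose proof (Defs.dist_pos X a1 e).
  destruct (gromov_le_cases a1 e b2 a2) as [Q | Q]; unfold gromov in *;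
    destruct (dist_near_cases a2 b1 near_a2 near_b1); lra.
Qed.

(* Four-point condition at [b2], comparing with [(phi b2, a2)_b2]: it is small since [phi] maps
   [a1, b1, b2] to [a2, b2, phi b2] and [b1] lies between [a1] and [b2]. *)
Lemma gromov_translate_at_b2_le (phi : X -> X) :
  dist_preserving phi -> phi a1 = a2 -> phi b1 = b2 -> gromov b1 (phi b2) b2 <= 21 * delta.
Proof.
  intros Hphi Ha Hb.
  assert (Hbe : mdist b2 (phi b2) = mdist b1 b2) by (rewrite <- Hb at 1; apply Hphi).
  assert (Hea : mdist (phi b2) a2 = mdist b2 a1) by (rewrite <- Ha; apply Hphi).
  set (e := phi b2) in *.
  pose proof dist_a1_a2. pose proof reach_b1. pose proof reach_b2.
  pose proof (Defs.dist_tri X o a1 b2). pose proof (Defs.dist_tri X o a1 a2).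
  pose proof (Defs.dist_pos X b1 e). pose proof (sym e b2). pose proof (sym e b1).
  pose proof (sym b1 a2). pose proof (sym b2 a1). pose proof (sym b2 b1).
  destruct (gromov_le_cases e b1 a2 b2) as [Q | Q]; unfold gromov in *;
    destruct (dist_near_cases b2 b1 near_b2 near_b1);
    destruct (dist_near_cases a2 b1 near_a2 near_b1); lra.
Qed.

Lemma two_broken_geodesics_estimates :
  gromov o a2 a1 <= 5 * delta /\ gromov a1 b1 a2 <= 11 * delta /\
  gromov a2 b2 b1 <= 14 * delta /\
  forall phi : X -> X, dist_preserving phi -> phi a1 = a2 -> phi b1 = b2 ->
    gromov a1 (phi a2) a2 <= 19 * delta /\ gromov b1 (phi b2) b2 <= 21 * delta.
Proof.
  split; [exact gromov_at_a1_le |]. split; [exact gromov_at_a2_le |].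
  split; [exact gromov_at_b1_le |]. intros phi Hphi Ha Hb.
  split; [exact (gromov_translate_at_a2_le phi Hphi Ha Hb) |
          exact (gromov_translate_at_b2_le phi Hphi Ha Hb)].
Qed.

End TwoBrokenGeodesics.

End Hyperbolic.

Theorem proposition2p31 (X : MetricSpace) (delta : R) (x0 : X)
  (u1 u2 v w1 w2 : isometry X) :
  geodesic_space X -> 0 <= delta -> hyperbolic X delta ->
  (forall x, u1 (v (w1 x)) = u2 (v (w2 x))) ->
  reduced delta x0 u1 v -> reduced delta x0 u2 v ->
  reduced delta x0 v w1 -> reduced delta x0 v w2 ->
  mdist (v x0) x0 > 26 * delta ->
  mdist (u1 x0) (u2 x0) <= mdist (v x0) x0 ->
  mdist (u1 x0) x0 <= mdist (u2 x0) x0 ->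
  let g := fun x => iso_inv u1 (u2 x) in
  (nbhd (C_set delta g) (190 * delta) x0 /\
   nbhd (C_set delta g) (190 * delta) (v x0)) /\
  gromov x0 (u2 x0) (u1 x0) <= 24 * delta /\
  gromov (u1 x0) (u1 (v x0)) (u2 x0) <= 66 * delta /\
  gromov (u2 x0) (u2 (v x0)) (u1 (v x0)) <= 138 * delta.
Proof.
  intros Hgeo Hd Hh Hcomp Hr1 Hr2 Hr3 Hr4 Hlong Hclose Hcloser g.
  assert (Hu1 := iso_dist_preserving X u1). assert (Hu2 := iso_dist_preserving X u2).
  assert (Hid : dist_preserving (fun x : X => x)) by (intros x y; reflexivity).
  destruct (two_broken_geodesics_estimates X delta Hh x0 (u1 x0) (u2 x0) (u1 (v x0))
              (u2 (v x0)) (u1 (v (w1 x0))) (mdist (v x0) x0)) as [E1 [E2 [E3 Ephi]]].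
  - exact (reduced_gromov_image X delta x0 _ u1 v Hid Hr1).
  - exact (reduced_gromov_image X delta x0 _ u2 v Hid Hr2).
  - exact (reduced_gromov_image X delta x0 u1 v w1 Hu1 Hr3).
  - rewrite Hcomp. exact (reduced_gromov_image X delta x0 u2 v w2 Hu2 Hr4).
  - rewrite Hu1. apply Defs.dist_sym.
  - rewrite Hu2. apply Defs.dist_sym.
  - lra.
  - exact Hclose.
  - exact Hcloser.
  - destruct (Ephi _ (comp_iso_inv_dist_preserving X u1 u2)) as [E4 E5];
      [apply (f_equal u2), iso_inv_l .. |].
    cbv beta in E4, E5.
    pose proof (nbhd_C_set X delta Hh g (iso_inv_comp_dist_preserving X u1 u2)) as HC.
    split; [split; apply HC; [exact Hgeo | | exact Hgeo |] | lra];
      rewrite <- (gromov_image X u1) by exact Hu1; unfold g; rewrite !iso_inv_r; lra.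
Qed.
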